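(* In the setting below, with $M$ of constant sectional curvature $K$, a nearly-hypo natural SU(2)-structure on $\mathcal S$ with $\tilde\theta=-2\theta$, $\omega_1=d\theta$, $\omega_2=b_0\alpha_0+b_1\alpha_1+b_2\alpha_2$, $\omega_3=\frac{Kb_1}{3}\alpha_0+\frac{s^2Kb_2-b_0}{6s^2}\alpha_1-\frac{b_1}{3s^2}\alpha_2$ (where $b_1^2-b_0b_2=1$, $(b_0+s^2Kb_2)^2+4s^2K=36s^4$, $K>-b_0^2/(s^2(1+b_1^2))$) is Sasaki–Einstein if and only if $K=9s^2$ (in particular $K>0$). Consequently, among those compatible with the canonical metric, all structures with $b_2=-b_0$, $b_1\ne0$, $b_0^2+b_1^2=1$, $K=3=s^{-2}$ are Sasaki–Einstein, and those with $b_2=-b_0=\pm1$, $b_1=0$, $s^2K+1=6s^2$ are Sasaki–Einstein if and only if $K=3$ and $s^2=1/3$.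
   Context: Let $(M,g)$ be a connected oriented Riemannian 3-manifold, $s>0$, and $\mathcal S=\{u\in TM:\|u\|=s\}$ the total space of the radius-$s$ tangent sphere bundle with the canonical (Sasaki-induced) metric. An adapted frame at $u\in\mathcal S$: take a positively oriented orthonormal frame $(f_0=u/s,f_1,f_2)$ of $T_{\pi(u)}M$ and set $e_0=f_0^h,e_1=f_1^h,e_2=f_2^h,e_3=f_1^v,e_4=f_2^v$ (horizontal and vertical lifts); dual coframe $e^0,\dots,e^4$, $e^{ij}=e^i\wedge e^j$. Globally defined forms: $\theta=s\,e^0$, $\alpha_0=e^{12}$, $\alpha_1=e^{14}-e^{23}$, $\alpha_2=e^{34}$, $d\theta=e^{31}+e^{42}$. For constant sectional curvature $K$: $d\alpha_0=s^{-2}\theta\wedge\alpha_1$, $d\alpha_1=2s^{-2}\theta\wedge\alpha_2-2K\theta\wedge\alpha_0$, $d\alpha_2=-K\theta\wedge\alpha_1$. An SU(2)-structure: $(\tilde\theta,\omega_1,\omega_2,\omega_3)$ with (C1) $\tilde\theta\wedge\omega_1\wedge\omega_1\neq0$, $\omega_i\wedge\omega_j=0$ ($i\ne j$), $\omega_1\wedge\omega_1=\omega_2\wedge\omega_2=\omega_3\wedge\omega_3=2v$, $v$ nowhere zero; (C2) $x\lrcorner\omega_1=y\lrcorner\omega_2\Rightarrow\omega_3(x,y)\ge0$. Nearly-hypo: $d\omega_2=3\tilde\theta\wedge\omega_3$, $d(\tilde\theta\wedge\omega_1)=-2\omega_1\wedge\omega_1$. Sasaki–Einstein SU(2)-structure: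 $d\tilde\theta=-2\omega_1$, $d\omega_2=3\tilde\theta\wedge\omega_3$, $d\omega_3=-3\tilde\theta\wedge\omega_2$. Compatible with the canonical metric: the metric $g_{SU(2)}$ on $\ker\tilde\theta$ defined by $x\lrcorner\omega_1\wedge y\lrcorner\omega_2\wedge\omega_3=g_{SU(2)}(x,y)\,v$ equals the canonical metric on $\ker\theta$. *)

From Stdlib Require Import Reals Arith.
Open Scope R_scope.

Fixpoint rsum (n : nat) (f : nat -> R) : R :=
  match n with O => 0 | S k => rsum k f + f k end.
Fixpoint nsum (n : nat) (f : nat -> nat) : nat :=
  match n with O => 0%nat | S k => (nsum k f + f k)%nat end.

(** Forms at a point of the 5-manifold S, written in the adapted coframe
    e^0,...,e^4.  A form is its coefficient function on subsets of
    {0,..,4} encoded as bitmasks m < 32: the coefficient of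
    e^{i1} /\ ... /\ e^{ik} (i1 < ... < ik) is stored at mask sum 2^{ij}.
    Coefficients at masks >= 32 are ignored. *)
Definition form := nat -> R.

Definition feq (a b : form) : Prop := forall m, (m < 32)%nat -> a m = b m.
Definition fzero (a : form) : Prop := forall m, (m < 32)%nat -> a m = 0.
Definition fadd (a b : form) : form := fun m => a m + b m.
Definition fscal (c : R) (a : form) : form := fun m => c * a m.
Definition fopp (a : form) : form := fun m => - a m.

(** sign of the shuffle sorting (p, q): (-1)^#{(i in p, j in q) | j < i} *)
Definition inv_count (p q : nat) : nat :=
  nsum 5 (fun i => nsum i (fun j =>
    if andb (Nat.testbit p i) (Nat.testbit q j) then 1%nat else 0%nat)).
Definition wsign (p q : nat) : R := if Nat.even (inv_count p q) then 1 else -1.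

Definition wedge (a b : form) : form := fun m =>
  rsum 32 (fun p => if Nat.eqb (Nat.land p m) p
                    then wsign p (Nat.lxor m p) * a p * b (Nat.lxor m p)
                    else 0).

Definition e (i : nat) : form := fun m => if Nat.eqb m (2 ^ i) then 1 else 0.
Definition e2 (i j : nat) : form := wedge (e i) (e j).

(** tangent vectors: components x 0, ..., x 4 in the adapted frame *)
Definition vec := nat -> R.

Definition ev1 (a : form) (x : vec) : R := rsum 5 (fun i => a (2 ^ i)%nat * x i).
Definition ev2at (w : form) (i j : nat) : R :=
  if Nat.ltb i j then w (2 ^ i + 2 ^ j)%nat
  else if Nat.ltb j i then - w (2 ^ i + 2 ^ j)%nat else 0.
Definition apply2 (w : form) (x y : vec) : R :=
  rsum 5 (fun i => rsum 5 (fun j => x i * y j * ev2at w i j)).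
Definition interior (x : vec) (w : form) : form := fun m =>
  rsum 5 (fun j => if Nat.eqb m (2 ^ j) then rsum 5 (fun i => x i * ev2at w i j) else 0).

Definition theta (s : R) : form := fscal s (e 0).
Definition alpha0 : form := e2 1 2.
Definition alpha1 : form := fadd (e2 1 4) (fopp (e2 2 3)).
Definition alpha2 : form := e2 3 4.
Definition dtheta : form := fadd (e2 3 1) (e2 4 2).

Record nform2 := NF2 { c_dt : R; c_a0 : R; c_a1 : R; c_a2 : R }.
Definition ev2 (w : nform2) : form :=
  fadd (fscal (c_dt w) dtheta)
   (fadd (fscal (c_a0 w) alpha0) (fadd (fscal (c_a1 w) alpha1) (fscal (c_a2 w) alpha2))).

(** Exterior derivative on natural forms, M of constant curvature K:
    d(t theta) = t dtheta, d(dtheta) = 0,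
    d alpha0 = s^-2 theta/\alpha1,
    d alpha1 = 2 s^-2 theta/\alpha2 - 2K theta/\alpha0,
    d alpha2 = -K theta/\alpha1. *)
Definition d_nat1 (t : R) : nform2 := NF2 t 0 0 0.
Definition d_nat2 (K s : R) (w : nform2) : form :=
  fadd (fscal (c_a0 w / s ^ 2) (wedge (theta s) alpha1))
  (fadd (fscal (c_a1 w) (fadd (fscal (2 / s ^ 2) (wedge (theta s) alpha2))
                               (fscal (- 2 * K) (wedge (theta s) alpha0))))
        (fscal (c_a2 w) (fscal (- K) (wedge (theta s) alpha1)))).
(** d((t theta) /\ w) = d(t theta) /\ w - (t theta) /\ dw  (Leibniz rule) *)
Definition d_nat3 (K s t : R) (w : nform2) : form :=
  fadd (wedge (ev2 (d_nat1 t)) (ev2 w))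
       (fopp (wedge (fscal t (theta s)) (d_nat2 K s w))).

Record natSU2 := NatSU2 { n_t : R; n_w1 : nform2; n_w2 : nform2; n_w3 : nform2 }.
Definition ttheta (s : R) (S : natSU2) : form := fscal (n_t S) (theta s).

Definition is_SU2 (tt w1 w2 w3 : form) : Prop :=
  (~ fzero (wedge (wedge tt w1) w1)) /\
  fzero (wedge w1 w2) /\ fzero (wedge w2 w1) /\
  fzero (wedge w1 w3) /\ fzero (wedge w3 w1) /\
  fzero (wedge w2 w3) /\ fzero (wedge w3 w2) /\
  (exists v : form, ~ fzero v /\
     feq (wedge w1 w1) (fscal 2 v) /\ feq (wedge w2 w2) (fscal 2 v) /\
     feq (wedge w3 w3) (fscal 2 v)) /\
  (forall x y : vec, feq (interior x w1) (interior y w2) -> 0 <= apply2 w3 x y).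

Definition natSU2_is_SU2 (s : R) (S : natSU2) : Prop :=
  is_SU2 (ttheta s S) (ev2 (n_w1 S)) (ev2 (n_w2 S)) (ev2 (n_w3 S)).

Definition nearly_hypo (K s : R) (S : natSU2) : Prop :=
  feq (d_nat2 K s (n_w2 S)) (fscal 3 (wedge (ttheta s S) (ev2 (n_w3 S)))) /\
  feq (d_nat3 K s (n_t S) (n_w1 S)) (fscal (-2) (wedge (ev2 (n_w1 S)) (ev2 (n_w1 S)))).

Definition sasaki_einstein (K s : R) (S : natSU2) : Prop :=
  feq (ev2 (d_nat1 (n_t S))) (fscal (-2) (ev2 (n_w1 S))) /\
  feq (d_nat2 K s (n_w2 S)) (fscal 3 (wedge (ttheta s S) (ev2 (n_w3 S)))) /\
  feq (d_nat2 K s (n_w3 S)) (fscal (-3) (wedge (ttheta s S) (ev2 (n_w2 S)))).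

(** canonical (Sasaki) metric: the adapted frame is orthonormal *)
Definition g_can (x y : vec) : R := rsum 5 (fun i => x i * y i).

Definition compatible (s : R) (S : natSU2) : Prop :=
  forall x y : vec, ev1 (ttheta s S) x = 0 -> ev1 (ttheta s S) y = 0 ->
    feq (wedge (wedge (interior x (ev2 (n_w1 S))) (interior y (ev2 (n_w2 S))))
               (ev2 (n_w3 S)))
        (fscal (g_can x y) (fscal (/ 2) (wedge (ev2 (n_w1 S)) (ev2 (n_w1 S))))).

Definition the_structure (K s b0 b1 b2 : R) : natSU2 :=
  NatSU2 (-2) (NF2 1 0 0 0) (NF2 0 b0 b1 b2)
         (NF2 0 (K * b1 / 3) ((s ^ 2 * K * b2 - b0) / (6 * s ^ 2)) (- (b1 / (3 * s ^ 2)))).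

(* Every form involved is natural, so the three Sasaki-Einstein equations
   reduce to identities between constant coefficients.  The equation
   d tt = -2 w1 holds for tt = -2 theta, w1 = d theta, and d w2 = 3 tt /\ w3
   is part of nearly-hypo.  Both d w3 and tt /\ w2 are combinations of the
   independent 3-forms theta /\ alpha_i, so d w3 = -3 tt /\ w2 amounts to
     K (s^2 K b2 - b0) = -18 s^2 b0,  K b1 = 9 s^2 b1,  s^2 K b2 - b0 = 18 s^4 b2.
   With b1^2 - b0 b2 = 1 these force K = 9 s^2 (through b1 <> 0, or b2 <> 0
   when b1 = 0); conversely K = 9 s^2 turns the quadric relation into
   (b0 + 9 s^4 b2)^2 = 0, and the three equations follow. *)

From Stdlib Require Import Reals Lra Lia Psatz.
Open Scope R_scope.

Lemma rsum_ext (n : nat) (f g : nat -> R) :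
  (forall k, f k = g k) -> rsum n f = rsum n g.
Proof. intros Hfg; induction n as [|n IH]; simpl; rewrite ?IH, ?Hfg; reflexivity. Qed.

Lemma rsum_add (n : nat) (f g : nat -> R) :
  rsum n (fun k => f k + g k) = rsum n f + rsum n g.
Proof. induction n as [|n IH]; simpl; [ring | rewrite IH; ring]. Qed.

Lemma rsum_scale (n : nat) (c : R) (f : nat -> R) :
  rsum n (fun k => c * f k) = c * rsum n f.
Proof. induction n as [|n IH]; simpl; [ring | rewrite IH; ring]. Qed.

Lemma wedge_addr (a b c : form) (m : nat) :
  wedge a (fadd b c) m = wedge a b m + wedge a c m.
Proof.
  unfold wedge, fadd; rewrite <- rsum_add; apply rsum_ext; intros p.
  destruct (Nat.eqb _ p); ring.
Qed.

Lemma wedge_scaler (a b : form) (c : R) (m : nat) :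
  wedge a (fscal c b) m = c * wedge a b m.
Proof.
  unfold wedge, fscal; rewrite <- rsum_scale; apply rsum_ext; intros p.
  destruct (Nat.eqb _ p); ring.
Qed.

Lemma wedge_scalel (a b : form) (c : R) (m : nat) :
  wedge (fscal c a) b m = c * wedge a b m.
Proof.
  unfold wedge, fscal; rewrite <- rsum_scale; apply rsum_ext; intros p.
  destruct (Nat.eqb _ p); ring.
Qed.

Definition e0_wedge_alpha (a0 a1 a2 : R) : form := fun m =>
  a0 * wedge (e 0) alpha0 m + a1 * wedge (e 0) alpha1 m + a2 * wedge (e 0) alpha2 m.

(* The masks 7, 19, 25 are e^012, e^014, e^034. *)
Lemma e0_wedge_alpha_coef (a0 a1 a2 : R) :
  e0_wedge_alpha a0 a1 a2 7%nat = a0 /\ e0_wedge_alpha a0 a1 a2 19%nat = a1 /\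
  e0_wedge_alpha a0 a1 a2 25%nat = a2.
Proof.
  unfold e0_wedge_alpha;
    repeat split; cbv -[Rplus Rmult Ropp Rinv Rdiv Rminus IZR pow]; ring.
Qed.

Lemma e0_wedge_alpha_inj (s a0 a1 a2 b0 b1 b2 : R) : s <> 0 ->
  (forall m, (m < 32)%nat -> s * e0_wedge_alpha a0 a1 a2 m = s * e0_wedge_alpha b0 b1 b2 m) <->
  a0 = b0 /\ a1 = b1 /\ a2 = b2.
Proof.
  intros Hs; split.
  - intros H.
    destruct (e0_wedge_alpha_coef a0 a1 a2) as (A0 & A1 & A2).
    destruct (e0_wedge_alpha_coef b0 b1 b2) as (B0 & B1 & B2).
    repeat split; apply (Rmult_eq_reg_l s); auto.
    + rewrite <- A0, <- B0; apply H; lia.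
    + rewrite <- A1, <- B1; apply H; lia.
    + rewrite <- A2, <- B2; apply H; lia.
  - intros (-> & -> & ->) m _; reflexivity.
Qed.

Lemma d_nat2_expand (K s : R) (w : nform2) (m : nat) :
  d_nat2 K s w m =
  s * e0_wedge_alpha (- 2 * K * c_a1 w) (c_a0 w / s ^ 2 - K * c_a2 w) (2 * c_a1 w / s ^ 2) m.
Proof.
  unfold d_nat2, e0_wedge_alpha, fadd, fscal, theta; rewrite !wedge_scalel.
  unfold Rdiv; ring.
Qed.

Lemma wedge_theta_expand (s t : R) (w : nform2) (m : nat) : c_dt w = 0 ->
  wedge (fscal t (theta s)) (ev2 w) m =
  s * e0_wedge_alpha (t * c_a0 w) (t * c_a1 w) (t * c_a2 w) m.
Proof.
  intros Hdt; unfold ev2, e0_wedge_alpha, theta.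
  rewrite !wedge_addr, !wedge_scaler, !wedge_scalel, Hdt; ring.
Qed.

Lemma d_nat2_feq_wedge (K s c t : R) (w w' : nform2) : s <> 0 -> c_dt w' = 0 ->
  feq (d_nat2 K s w) (fscal c (wedge (fscal t (theta s)) (ev2 w'))) <->
  - 2 * K * c_a1 w = c * t * c_a0 w' /\
  c_a0 w / s ^ 2 - K * c_a2 w = c * t * c_a1 w' /\
  2 * c_a1 w / s ^ 2 = c * t * c_a2 w'.
Proof.
  intros Hs Hdt; rewrite <- e0_wedge_alpha_inj by exact Hs.
  assert (Hrhs : forall m, fscal c (wedge (fscal t (theta s)) (ev2 w')) m =
    s * e0_wedge_alpha (c * t * c_a0 w') (c * t * c_a1 w') (c * t * c_a2 w') m).
  { intros m; unfold fscal at 1; rewrite wedge_theta_expand by exact Hdt.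
    unfold e0_wedge_alpha; ring. }
  unfold feq; split; intros H m Hm; specialize (H m Hm);
    rewrite ?d_nat2_expand, ?Hrhs in *; exact H.
Qed.

Lemma eq_iff_scaled_diff (k a b c d : R) : k <> 0 ->
  a - b = k * (c - d) -> (a = b <-> c = d).
Proof.
  intros Hk Hdiff; split; intros E.
  - rewrite E, Rminus_diag in Hdiff; symmetry in Hdiff.
    apply Rmult_integral in Hdiff as [|]; [contradiction | lra].
  - rewrite E, Rminus_diag, Rmult_0_r in Hdiff; lra.
Qed.

Lemma the_structure_sasaki_einstein_iff (K s b0 b1 b2 : R) : s <> 0 ->
  nearly_hypo K s (the_structure K s b0 b1 b2) ->
  sasaki_einstein K s (the_structure K s b0 b1 b2) <->
  K * (s ^ 2 * K * b2 - b0) = - 18 * s ^ 2 * b0 /\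
  K * b1 = 9 * s ^ 2 * b1 /\
  s ^ 2 * K * b2 - b0 = 18 * s ^ 4 * b2.
Proof.
  intros Hs [Hw2 _].
  assert (Hs2 : s ^ 2 <> 0) by (apply pow_nonzero; exact Hs).
  assert (Hdtheta : feq (ev2 (d_nat1 (-2))) (fscal (-2) (ev2 (NF2 1 0 0 0)))).
  { intros m _; unfold ev2, fadd, fscal; simpl; ring. }
  unfold sasaki_einstein, ttheta.
  rewrite (d_nat2_feq_wedge K s (-3) (n_t (the_structure K s b0 b1 b2))
             (n_w3 (the_structure K s b0 b1 b2))) by (auto; reflexivity).
  cbn [the_structure n_t n_w1 n_w2 n_w3 c_dt c_a0 c_a1 c_a2].
  assert (Hk0 : - / (3 * s ^ 2) <> 0)
    by (apply Ropp_neq_0_compat, Rinv_neq_0_compat; lra).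
  assert (Hk1 : 2 / (3 * s ^ 2) <> 0)
    by (apply Rmult_integral_contrapositive; split; [lra | apply Rinv_neq_0_compat; lra]).
  assert (Hk2 : / (3 * s ^ 4) <> 0)
    by (apply Rinv_neq_0_compat, Rmult_integral_contrapositive; split;
        [lra | apply pow_nonzero; exact Hs]).
  rewrite (eq_iff_scaled_diff _ (-2 * K * _) _
            (K * (s ^ 2 * K * b2 - b0)) (- 18 * s ^ 2 * b0) Hk0) by (field; auto).
  rewrite (eq_iff_scaled_diff _ (K * b1 / 3 / s ^ 2 - _) _
            (K * b1) (9 * s ^ 2 * b1) Hk1) by (field; auto).
  rewrite (eq_iff_scaled_diff _ (2 * _ / s ^ 2) _
            (s ^ 2 * K * b2 - b0) (18 * s ^ 4 * b2) Hk2) by (field; auto).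
  tauto.
Qed.

Lemma curvature_equations_iff (K s b0 b1 b2 : R) : s <> 0 ->
  b1 ^ 2 - b0 * b2 = 1 ->
  (b0 + s ^ 2 * K * b2) ^ 2 + 4 * s ^ 2 * K = 36 * s ^ 4 ->
  (K * (s ^ 2 * K * b2 - b0) = - 18 * s ^ 2 * b0 /\
   K * b1 = 9 * s ^ 2 * b1 /\
   s ^ 2 * K * b2 - b0 = 18 * s ^ 4 * b2) <-> K = 9 * s ^ 2.
Proof.
  intros Hs hb hq.
  assert (Hs2 : 0 < s ^ 2) by (rewrite <- Rsqr_pow2; apply Rsqr_pos_lt, Hs).
  split.
  - intros (E0 & E1 & E2).
    destruct (Req_dec b1 0) as [Hb1 | Hb1].
    + subst b1.
      assert (Hb2 : b2 <> 0) by (intros ->; lra).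
      assert (Hb0 : b0 = - K * s ^ 2 * b2).
      { apply (Rmult_eq_reg_l (18 * s ^ 2)); [| lra].
        rewrite E2 in E0; nra. }
      subst b0.
      apply (Rmult_eq_reg_l (2 * s ^ 2 * b2)); [nra |].
      apply Rmult_integral_contrapositive; split; lra.
    + apply (Rmult_eq_reg_l b1); [lra | exact Hb1].
  - intros ->.
    assert (Hb0 : b0 = - 9 * s ^ 4 * b2).
    { assert (Hsq : (b0 + 9 * s ^ 4 * b2) ^ 2 = 0) by nra; nra. }
    subst b0; repeat split; ring.
Qed.

Theorem mainTheorem9 (K s b0 b1 b2 : R) (hs : 0 < s)
  (hb : b1 ^ 2 - b0 * b2 = 1)
  (hq : (b0 + s ^ 2 * K * b2) ^ 2 + 4 * s ^ 2 * K = 36 * s ^ 4)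
  (hK : K > - b0 ^ 2 / (s ^ 2 * (1 + b1 ^ 2)))
  (hSU2 : natSU2_is_SU2 s (the_structure K s b0 b1 b2))
  (hNH : nearly_hypo K s (the_structure K s b0 b1 b2)) :
  (sasaki_einstein K s (the_structure K s b0 b1 b2) <-> K = 9 * s ^ 2) /\
  (sasaki_einstein K s (the_structure K s b0 b1 b2) -> 0 < K) /\
  (compatible s (the_structure K s b0 b1 b2) ->
     (b2 = - b0 -> b1 <> 0 -> b0 ^ 2 + b1 ^ 2 = 1 -> K = 3 -> / s ^ 2 = 3 ->
        sasaki_einstein K s (the_structure K s b0 b1 b2)) /\
     (b2 = - b0 -> (- b0 = 1 \/ - b0 = -1) -> b1 = 0 -> s ^ 2 * K + 1 = 6 * s ^ 2 ->
        (sasaki_einstein K s (the_structure K s b0 b1 b2) <-> K = 3 /\ s ^ 2 = 1 / 3))).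
Proof.
  assert (Hs : s <> 0) by lra.
  assert (Hs2 : 0 < s ^ 2) by (apply pow_lt, hs).
  assert (HSE : sasaki_einstein K s (the_structure K s b0 b1 b2) <-> K = 9 * s ^ 2).
  { rewrite the_structure_sasaki_einstein_iff by assumption.
    apply curvature_equations_iff; assumption. }
  rewrite HSE; split; [tauto | split; [lra | intros _; split]].
  - intros _ _ _ -> Hinv.
    assert (Hs2v : s ^ 2 = / 3) by (rewrite <- Hinv, Rinv_inv; reflexivity).
    lra.
  - intros _ _ _ Hrel; split.
    + intros ->.
      assert (Hsq : (3 * s ^ 2 - 1) ^ 2 = 0) by nra.
      assert (Hs2v : 3 * s ^ 2 - 1 = 0) by nra.
      lra.
    + intros [-> ->]; lra.
Qed.
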